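(* Let $\mathcal{S}:=\{z=(z_1,z_2,z_3,z_{11},z_{12},z_{13},z_{23}): z_{11}=z_1^2,\ z_{ij}=z_iz_j\ (1\le i<j\le3),\ 0\le z_i\le1\ (i=1,2,3)\}$. Then $\mathcal{C}^{\rm SDP+MC+Tri}_3$ is not an extended formulation for $\mathrm{conv}(\mathcal{S})$: the projection of $\mathcal{C}^{\rm SDP+MC+Tri}_3$ onto the coordinates $(x_1,x_2,x_3,Y_{11},Y_{12},Y_{13},Y_{23})$ (identified with $(z_1,z_2,z_3,z_{11},z_{12},z_{13},z_{23})$) is not equal to $\mathrm{conv}(\mathcal{S})$.
   Context: $\mathcal{C}^{\rm SDP}_n$ is the set of $(x,Y)$, $x\in[0,1]^n$, $Y$ symmetric $n\times n$, with $\begin{bmatrix}1&x^\top\\ x&Y\end{bmatrix}\succeq0$ and $Y_{kk}\le x_k$ for all $k$. $\mathcal{C}^{\rm SDP+MC+Tri}_n$ adds, for all $1\le k<l\le n$, $Y_{kl}\ge0$, $Y_{kl}\ge x_k+x_l-1$, $Y_{kl}\le x_k$, $Y_{kl}\le x_l$, and for all $1\le k<l<m\le n$, $Y_{kl}+Y_{km}\le x_k+Y_{lm}$, $Y_{kl}+Y_{lm}\le x_l+Y_{km}$, $Y_{km}+Y_{lm}\le x_m+Y_{kl}$, $x_k+x_l+x_m-Y_{kl}-Y_{km}-Y_{lm}\le1$. *)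

From HB Require Import structures.
From mathcomp Require Import all_boot all_order all_algebra.
From mathcomp Require Import reals.
Set Implicit Arguments. Unset Strict Implicit. Unset Printing Implicit Defensive.
Import Order.TTheory GRing.Theory Num.Theory.
Local Open Scope ring_scope.

Section Defs.
Variable R : realType.

Definition psd (n : nat) (M : 'M[R]_n) : Prop :=
  forall v : 'cV[R]_n, 0 <= (v^T *m M *m v) 0 0.

Definition liftM (n : nat) (x : 'cV[R]_n) (Y : 'M[R]_n) : 'M[R]_(1 + n) :=
  block_mx 1 x^T x Y.

Definition C_SDP (n : nat) (x : 'cV[R]_n) (Y : 'M[R]_n) : Prop :=
  (forall k, 0 <= x k 0 /\ x k 0 <= 1) /\
  Y^T = Y /\
  psd (liftM x Y) /\
  (forall k, Y k k <= x k 0).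

Definition MC (n : nat) (x : 'cV[R]_n) (Y : 'M[R]_n) : Prop :=
  forall k l : 'I_n, (k < l)%N ->
    0 <= Y k l /\ x k 0 + x l 0 - 1 <= Y k l /\ Y k l <= x k 0 /\ Y k l <= x l 0.

Definition Tri (n : nat) (x : 'cV[R]_n) (Y : 'M[R]_n) : Prop :=
  forall k l m : 'I_n, (k < l)%N -> (l < m)%N ->
    Y k l + Y k m <= x k 0 + Y l m /\
    Y k l + Y l m <= x l 0 + Y k m /\
    Y k m + Y l m <= x m 0 + Y k l /\
    x k 0 + x l 0 + x m 0 - Y k l - Y k m - Y l m <= 1.

Definition C_SDP_MC_Tri (n : nat) (x : 'cV[R]_n) (Y : 'M[R]_n) : Prop :=
  C_SDP x Y /\ MC x Y /\ Tri x Y.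

Definition i0 : 'I_3 := @inord 2 0.
Definition i1 : 'I_3 := @inord 2 1.
Definition i2 : 'I_3 := @inord 2 2.

Definition vec7 (a1 a2 a3 a4 a5 a6 a7 : R) : 'rV[R]_7 :=
  \row_(i < 7) nth 0 [:: a1; a2; a3; a4; a5; a6; a7] i.

Definition projxY (x : 'cV[R]_3) (Y : 'M[R]_3) : 'rV[R]_7 :=
  vec7 (x i0 0) (x i1 0) (x i2 0) (Y i0 i0) (Y i0 i1) (Y i0 i2) (Y i1 i2).

Definition projC3 (z : 'rV[R]_7) : Prop :=
  exists (x : 'cV[R]_3) (Y : 'M[R]_3), C_SDP_MC_Tri x Y /\ z = projxY x Y.

Definition S3 (z : 'rV[R]_7) : Prop :=
  exists z1 z2 z3 : R,
    [/\ 0 <= z1 <= 1, 0 <= z2 <= 1, 0 <= z3 <= 1 &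
        z = vec7 z1 z2 z3 (z1 ^+ 2) (z1 * z2) (z1 * z3) (z2 * z3)].

Definition conv (n : nat) (A : 'rV[R]_n -> Prop) (z : 'rV[R]_n) : Prop :=
  exists (k : nat) (lam : 'I_k -> R) (p : 'I_k -> 'rV[R]_n),
    (forall i, 0 <= lam i) /\ \sum_(i < k) lam i = 1 /\
    (forall i, A (p i)) /\ z = \sum_(i < k) lam i *: p i.

End Defs.

From HB Require Import structures.
From mathcomp Require Import all_boot all_order all_algebra.
From mathcomp Require Import reals.
From mathcomp Require Import ring lra.
Set Implicit Arguments. Unset Strict Implicit. Unset Printing Implicit Defensive.
Import Order.TTheory GRing.Theory Num.Theory.
Local Open Scope ring_scope.

(* The linear inequality
     2 z1 + z11 - 2 z12 - 2 z13 + z23 >= 0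
   is valid on S, since on S its left-hand side is a sum of products of the
   nonnegative factors z_i, 1 - z_i and squares; hence it is valid on conv(S).
   The point x = (1/4, 1/2, 1/2) with Y = [3/16 1/4 1/4; 1/4 1/2 1/4; 1/4 1/4 1/2]
   satisfies all McCormick and triangle inequalities, and its lifted matrix is
   the Gram matrix of the rows of
     [1 0 0; 1/4 1/4 1/4; 1/2 1/2 0; 1/2 0 1/2],
   so it lies in C^{SDP+MC+Tri}_3.  Yet it violates the inequality: the left-hand
   side equals -1/16. *)

Lemma cut_poly_ge0 (R : realDomainType) (z1 z2 z3 : R) :
  0 <= z1 -> 0 <= z2 <= 1 -> 0 <= z3 <= 1 ->
  0 <= 2 * z1 + z1 ^+ 2 - 2 * (z1 * z2) - 2 * (z1 * z3) + z2 * z3.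
Proof.
move=> z1_ge0 /andP[z2_ge0 z2_le1] /andP[z3_ge0 z3_le1].
have -> : 2 * z1 + z1 ^+ 2 - 2 * (z1 * z2) - 2 * (z1 * z3) + z2 * z3 =
    (1 - z2) * (1 - z3) * (z1 ^+ 2 + 2 * z1) + z2 * (1 - z3) * z1 ^+ 2
    + (1 - z2) * z3 * z1 ^+ 2 + z2 * z3 * (1 - z1) ^+ 2 by ring.
have [w2 w3] : 0 <= 1 - z2 /\ 0 <= 1 - z3 by rewrite !subr_ge0.
have q1 : 0 <= z1 ^+ 2 + 2 * z1 by rewrite addr_ge0 ?sqr_ge0 ?mulr_ge0.
by rewrite !addr_ge0 // mulr_ge0 ?sqr_ge0 ?mulr_ge0.
Qed.

Section Counterexample.
Variable R : realType.

Lemma conv_halfspace n (A : 'rV[R]_n -> Prop) (c : 'cV[R]_n) (b : R) :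
  (forall z, A z -> b <= (z *m c) 0 0) ->
  forall z, conv A z -> b <= (z *m c) 0 0.
Proof.
move=> Ab _ [k [lam [p [lam_ge0 [lam_sum1 [Ap ->]]]]]].
rewrite mulmx_suml summxE.
under eq_bigr => i _ do rewrite -scalemxAl mxE.
rewrite -[b]mul1r -lam_sum1 mulr_suml.
by apply: ler_sum => i _; rewrite ler_wpM2l ?Ab.
Qed.

Lemma psd_gram n m (G : 'M[R]_(n, m)) : psd (G *m G^T).
Proof.
move=> v.
have -> : v^T *m (G *m G^T) *m v = (G^T *m v)^T *m (G^T *m v).
  by rewrite trmx_mul trmxK !mulmxA.
rewrite mxE; apply: sumr_ge0 => i _.
by rewrite mxE -expr2 sqr_ge0.
Qed.

Lemma liftM_gram n m (g : 'rV[R]_m) (F : 'M[R]_(n, m)) :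
  g *m g^T = 1 ->
  liftM (F *m g^T) (F *m F^T) = col_mx g F *m (col_mx g F)^T.
Proof.
move=> gg1.
by rewrite tr_col_mx mul_col_mx !mul_mx_row -block_mxEv gg1 /liftM trmx_mul trmxK.
Qed.

Definition cut_coef : 'cV[R]_7 := \col_(i < 7) nth 0 [:: 2; 0; 0; 1; -2; -2; 1] i.

Lemma vec7_cut a1 a2 a3 a4 a5 a6 a7 :
  (vec7 a1 a2 a3 a4 a5 a6 a7 *m cut_coef) 0 0 = 2 * a1 + a4 - 2 * a5 - 2 * a6 + a7.
Proof. by rewrite mxE !big_ord_recr big_ord0 /= !mxE /=; ring. Qed.

Lemma S3_cut z : S3 z -> 0 <= (z *m cut_coef) 0 0.
Proof.
case=> [z1 [z2 [z3 [/andP[z1_ge0 _] z2_01 z3_01 ->]]]].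
by rewrite vec7_cut cut_poly_ge0.
Qed.

Definition g_sep : 'rV[R]_3 := delta_mx 0 0.
Definition F_sep : 'M[R]_3 := \matrix_(i, j)
  nth 0 (nth [::] [:: [:: 1/4; 1/4; 1/4]; [:: 1/2; 1/2; 0]; [:: 1/2; 0; 1/2]] i) j.
Definition x_sep : 'cV[R]_3 := \col_i nth 0 [:: 1/4; 1/2; 1/2] i.
Definition Y_sep : 'M[R]_3 := \matrix_(i, j)
  nth 0 (nth [::] [:: [:: 3/16; 1/4; 1/4]; [:: 1/4; 1/2; 1/4]; [:: 1/4; 1/4; 1/2]] i) j.

Lemma x_sep_gram : x_sep = F_sep *m g_sep^T.
Proof.
apply/matrixP => i j; rewrite !mxE !big_ord_recr big_ord0 /= !mxE.
by case: i => [[|[|[|i]]] Hi] //=; rewrite (ord1 j) /=; ring.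
Qed.

Lemma Y_sep_gram : Y_sep = F_sep *m F_sep^T.
Proof.
apply/matrixP => i j; rewrite !mxE !big_ord_recr big_ord0 /= !mxE.
by case: i => [[|[|[|i]]] Hi] //; case: j => [[|[|[|j]]] Hj] //=; field.
Qed.

Lemma g_sep_unit : g_sep *m g_sep^T = 1.
Proof.
rewrite /g_sep trmx_delta mul_delta_mx.
by apply/matrixP => i j; rewrite !ord1 !mxE.
Qed.

Lemma C_SDP_sep : C_SDP x_sep Y_sep.
Proof.
split; [|split; [|split]].
- by case=> [[|[|[|k]]] Hk] //; rewrite !mxE /=; lra.
- by rewrite Y_sep_gram trmx_mul trmxK.
- by rewrite x_sep_gram Y_sep_gram liftM_gram ?g_sep_unit //; apply: psd_gram.
- by case=> [[|[|[|k]]] Hk] //; rewrite !mxE /=; lra.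
Qed.

Lemma MC_sep : MC x_sep Y_sep.
Proof.
by case=> [[|[|[|k]]] Hk] //; case=> [[|[|[|l]]] Hl] //= _; rewrite !mxE /=; lra.
Qed.

Lemma Tri_sep : Tri x_sep Y_sep.
Proof.
by case=> [[|[|[|k]]] Hk] //; case=> [[|[|[|l]]] Hl] //;
  case=> [[|[|[|m]]] Hm] //= _ _; rewrite !mxE /=; lra.
Qed.

Lemma projxY_sep :
  projxY x_sep Y_sep = vec7 (1/4) (1/2) (1/2) (3/16) (1/4) (1/4) (1/4).
Proof. by rewrite /projxY !mxE /i0 /i1 /i2 !inordK. Qed.

End Counterexample.

Theorem corollary2 (R : realType) :
  ~ (forall z : 'rV[R]_7, projC3 z <-> conv (@S3 R) z).
Proof.
move=> projC3_conv.
have : conv (@S3 R) (projxY (x_sep R) (Y_sep R)).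
  apply/projC3_conv; exists (x_sep R), (Y_sep R).
  by split=> //; split; [exact: C_SDP_sep | split; [exact: MC_sep | exact: Tri_sep]].
move/(conv_halfspace (@S3_cut R)).
by rewrite projxY_sep vec7_cut; lra.
Qed.
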